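(* In the setting described in the context, take $\delta_c=0$ and $\delta_s>0$, so that the problem becomes the CRLB minimization problem $\max\{-\delta_s\,\mathrm{tr}(\mathbf F(\mathbf W)^{-1}):\mathbf W=[\mathbf W_c,\mathbf W_s]\in\mathbb C^{N_t\times(K+N_s)},\ \mathrm{tr}(\mathbf W\mathbf W^H)\le P_t\}$. Then every optimal solution $\mathbf W^\diamond=[\mathbf W_c^\diamond,\mathbf W_s^\diamond]$ of this problem satisfies $\mathrm{rank}(\mathbf W_s^\diamond)\le 3M$.
   Context: Positive integers $N_t,N_r,K,M,L$, nonnegative integer $N_s$; $\sigma_s^2>0$; $P_t>0$. $\mathbf W_c\in\mathbb C^{N_t\times K}$, $\mathbf W_s\in\mathbb C^{N_t\times N_s}$, $\mathbf R_x=\mathbf W_c\mathbf W_c^H+\mathbf W_s\mathbf W_s^H$. Sensing model: differentiable $\mathbf a:\mathbb R^2\to\mathbb C^{N_t}$, $\mathbf b:\mathbb R^2\to\mathbb C^{N_r}$; parameters $\theta_m,\phi_m\in\mathbb R,\alpha_m\in\mathbb C$ ($m=1,\dots,M$); $\mathbf A=[\mathbf a(\theta_m,\phi_m)]_m$, $\mathbf B=[\mathbf b(\theta_m,\phi_m)]_m$, $\mathbf U=\mathrm{diag}(\alpha_m)$; $\dot{\mathbf A}_\theta,\dot{\mathbf A}_\phi,\dot{\mathbf B}_\theta,\dot{\mathbf B}_\phi$ have $m$-th columns the partial derivatives of $\mathbf a$ resp. $\mathbf b$ w.r.t. first resp. second argument at $(\theta_m,\phi_m)$. $\mathbf F(\mathbf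 W)=\frac{2L}{\sigma_s^2}\begin{bmatrix}\Re\mathbf F_{11}&\Re\mathbf F_{12}&\Re\mathbf F_{13}&-\Im\mathbf F_{13}\\ \Re\mathbf F_{12}^{\mathsf T}&\Re\mathbf F_{22}&\Re\mathbf F_{23}&-\Im\mathbf F_{23}\\ \Re\mathbf F_{13}^{\mathsf T}&\Re\mathbf F_{23}^{\mathsf T}&\Re\mathbf F_{33}&-\Im\mathbf F_{33}\\ -\Im\mathbf F_{13}^{\mathsf T}&-\Im\mathbf F_{23}^{\mathsf T}&-\Im\mathbf F_{33}^{\mathsf T}&\Re\mathbf F_{33}\end{bmatrix}$ with $\mathbf F_{11}=(\mathbf U\mathbf A^H\mathbf R_x\mathbf A\mathbf U^H)^{\mathsf T}\odot(\dot{\mathbf B}_\theta^H\dot{\mathbf B}_\theta)+(\mathbf U\mathbf A^H\mathbf R_x\dot{\mathbf A}_\theta\mathbf U^H)^{\mathsf T}\odot(\mathbf B^H\dot{\mathbf B}_\theta)+(\mathbf U\dot{\mathbf A}_\theta^H\mathbf R_x\mathbf A\mathbf U^H)^{\mathsf T}\odot(\dot{\mathbf B}_\theta^H\mathbf B)+(\mathbf U\dot{\mathbf A}_\theta^H\mathbf R_x\dot{\mathbf A}_\theta\mathbf U^H)^{\mathsf T}\odot(\mathbf B^H\mathbf B)$; $\mathbf F_{12}=(\mathbf U\mathbf A^H\mathbf R_x\mathbf A\mathbf U^H)^{\mathsf T}\odot(\dot{\mathbf B}_\theta^H\dot{\mathbf B}_\phi)+(\mathbf U\mathbf A^H\mathbf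 R_x\dot{\mathbf A}_\theta\mathbf U^H)^{\mathsf T}\odot(\mathbf B^H\dot{\mathbf B}_\phi)+(\mathbf U\dot{\mathbf A}_\phi^H\mathbf R_x\mathbf A\mathbf U^H)^{\mathsf T}\odot(\dot{\mathbf B}_\theta^H\mathbf B)+(\mathbf U\dot{\mathbf A}_\phi^H\mathbf R_x\dot{\mathbf A}_\theta\mathbf U^H)^{\mathsf T}\odot(\mathbf B^H\mathbf B)$; $\mathbf F_{22}$ = $\mathbf F_{11}$ with $\theta\to\phi$; $\mathbf F_{13}=(\mathbf A^H\mathbf R_x\mathbf A\mathbf U^H)^{\mathsf T}\odot(\dot{\mathbf B}_\theta^H\mathbf B)+(\mathbf A^H\mathbf R_x\dot{\mathbf A}_\theta\mathbf U^H)^{\mathsf T}\odot(\mathbf B^H\mathbf B)$; $\mathbf F_{23}$ = $\mathbf F_{13}$ with $\theta\to\phi$; $\mathbf F_{33}=(\mathbf A^H\mathbf R_x\mathbf A)^{\mathsf T}\odot(\mathbf B^H\mathbf B)$ ($\odot$ Hadamard product); the objective is considered where $\mathbf F(\mathbf W)$ is invertible. *)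

From HB Require Import structures.
From mathcomp Require Import all_boot all_order all_algebra.
From mathcomp Require Import all_classical all_reals all_analysis.
From mathcomp Require Import complex.
Set Implicit Arguments. Unset Strict Implicit. Unset Printing Implicit Defensive.
Import Order.TTheory GRing.Theory Num.Theory.
Local Open Scope ring_scope.
Local Open Scope complex_scope.

Section Defs.
Variable R : realType.
Local Notation C := R[i].

Definition hermT m n (A : 'M[C]_(m, n)) : 'M[C]_(n, m) := (map_mx conjc A)^T.

Definition hadamard m n (A B : 'M[C]_(m, n)) : 'M[C]_(m, n) :=
  \matrix_(i, j) (A i j * B i j).

Definition ReM m n (A : 'M[C]_(m, n)) : 'M[R]_(m, n) := map_mx (@complex.Re R) A.
Definition ImM m n (A : 'M[C]_(m, n)) : 'M[R]_(m, n) := map_mx (@complex.Im R) A.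

Definition steer N M (v : R -> R -> 'cV[C]_N) (th ph : 'I_M -> R) : 'M[C]_(N, M) :=
  \matrix_(i, m) v (th m) (ph m) i ord0.

Definition is_partial1 N (v dv : R -> R -> 'cV[C]_N) : Prop :=
  forall (t p : R) (k : 'I_N),
    is_derive t (1 : R) (fun s => complex.Re (v s p k ord0)) (complex.Re (dv t p k ord0)) /\
    is_derive t (1 : R) (fun s => complex.Im (v s p k ord0)) (complex.Im (dv t p k ord0)).

Definition is_partial2 N (v dv : R -> R -> 'cV[C]_N) : Prop :=
  forall (t p : R) (k : 'I_N),
    is_derive p (1 : R) (fun s => complex.Re (v t s k ord0)) (complex.Re (dv t p k ord0)) /\
    is_derive p (1 : R) (fun s => complex.Im (v t s k ord0)) (complex.Im (dv t p k ord0)).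

Section FIM.
Variables (Nt Nr M L : nat) (sigma2 : R) (alpha : 'I_M -> C).
Variables (A dAt dAp : 'M[C]_(Nt, M)) (B dBt dBp : 'M[C]_(Nr, M)).
Variable Rx : 'M[C]_Nt.

Definition Umx : 'M[C]_M := diag_mx (\row_m alpha m).

Definition F11g (dA1 dA2 : 'M[C]_(Nt, M)) (dB1 dB2 : 'M[C]_(Nr, M)) : 'M[C]_M :=
  hadamard (Umx *m hermT A *m Rx *m A *m hermT Umx)^T (hermT dB1 *m dB2)
  + hadamard (Umx *m hermT A *m Rx *m dA1 *m hermT Umx)^T (hermT B *m dB2)
  + hadamard (Umx *m hermT dA2 *m Rx *m A *m hermT Umx)^T (hermT dB1 *m B)
  + hadamard (Umx *m hermT dA2 *m Rx *m dA1 *m hermT Umx)^T (hermT B *m B).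

Definition F11 := F11g dAt dAt dBt dBt.
Definition F12 := F11g dAt dAp dBt dBp.
Definition F22 := F11g dAp dAp dBp dBp.

Definition F13g (dA : 'M[C]_(Nt, M)) (dB : 'M[C]_(Nr, M)) : 'M[C]_M :=
  hadamard (hermT A *m Rx *m A *m hermT Umx)^T (hermT dB *m B)
  + hadamard (hermT A *m Rx *m dA *m hermT Umx)^T (hermT B *m B).

Definition F13 := F13g dAt dBt.
Definition F23 := F13g dAp dBp.
Definition F33 : 'M[C]_M := hadamard (hermT A *m Rx *m A)^T (hermT B *m B).

Definition FIM : 'M[R]_((M + M) + (M + M)) :=
  ((2 * L%:R) / sigma2) *:
  block_mx
    (block_mx (ReM F11) (ReM F12) (ReM F12)^T (ReM F22))
    (block_mx (ReM F13) (- ImM F13) (ReM F23) (- ImM F23))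
    (block_mx (ReM F13)^T (ReM F23)^T (- ImM F13)^T (- ImM F23)^T)
    (block_mx (ReM F33) (- ImM F33) (- ImM F33)^T (ReM F33)).
End FIM.

End Defs.

From Pilot Require Import Defs.
From HB Require Import structures.
From mathcomp Require Import all_boot all_order all_algebra.
From mathcomp Require Import all_classical all_reals all_analysis.
From mathcomp Require Import complex.
From mathcomp Require Import ring lra zify.
Import Order.TTheory GRing.Theory Num.Theory.
Set Implicit Arguments. Unset Strict Implicit. Unset Printing Implicit Defensive.
Local Open Scope ring_scope.
Local Open Scope complex_scope.

(* With Q = [A^H; dA_theta^H; dA_phi^H] (3M rows), F(W) depends on W only through
   Q W, and it is (2L/sigma2) times the real Gram matrix of the derivatives of the
   noiseless echo, so it is positive semidefinite and tr F^-1 > 0 whenever F is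
   invertible.  If rank Ws > 3M, some y satisfies Q Ws y = 0 but Ws y <> 0; removing
   the rank-one part (Ws y) y^H / |y|^2 from Ws leaves F unchanged and strictly
   lowers the transmit power.  Scaling the new precoder by sqrt lam, lam > 1, spends
   the freed power and turns F into lam F, so tr F^-1 drops by the factor lam, and
   the original precoder was not optimal. *)

Lemma exists_ker_vector (F : fieldType) m n p (Q : 'M[F]_(m, n)) (X : 'M[F]_(p, n)) :
  (m < \rank X)%N -> exists2 y : 'cV_n, Q *m y = 0 & X *m y != 0.
Proof.
move=> rank_gt; set K := kermx Q^T.
have [i XKi | XK0] := pickP (fun i => row i K *m X^T != 0).
  exists (row i K)^T; last by rewrite -[X]trmxK -trmx_mul trmx_eq0.
  have /sub_kermxP KQ0 : (row i K <= K)%MS by exact: row_sub.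
  by rewrite -[Q]trmxK -trmx_mul KQ0 trmx0.
have /mxrankS : (K <= kermx X^T)%MS.
  by apply/sub_kermxP/row_matrixP => i; rewrite row_mul row0; apply/eqP/negbFE/XK0.
rewrite !mxrank_ker !mxrank_tr.
have := rank_leq_row Q; have := rank_leq_col X; lia.
Qed.

Lemma exists_scale_gt1 (R : realFieldType) (p P : R) :
  0 <= p -> p < P -> exists2 lam, 1 < lam & lam * p <= P.
Proof.
move=> p_ge0 p_lt; exists (2 * P / (P + p)).
  by rewrite ltr_pdivlMr; lra.
rewrite mulrAC ler_pdivrMr; last by lra.
have : 0 <= P * (P - p) by apply: mulr_ge0; lra.
nra.
Qed.

Section ComplexMatrices.
Variable R : realType.
Local Notation C := R[i].

Lemma hermTE m n (X : 'M[C]_(m, n)) i j : hermT X i j = conjc (X j i).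
Proof. by rewrite !mxE. Qed.

Lemma hermTK m n (X : 'M[C]_(m, n)) : hermT (hermT X) = X.
Proof. by apply/matrixP => i j; rewrite !hermTE conjcK. Qed.

Lemma hermT_mul m n p (X : 'M[C]_(m, n)) (Y : 'M[C]_(n, p)) :
  hermT (X *m Y) = hermT Y *m hermT X.
Proof. by rewrite /hermT map_mxM trmx_mul. Qed.

Lemma hermT_row m n1 n2 (X : 'M[C]_(m, n1)) (Y : 'M[C]_(m, n2)) :
  hermT (row_mx X Y) = col_mx (hermT X) (hermT Y).
Proof. by rewrite /hermT map_row_mx tr_row_mx. Qed.

Lemma hermTD m n (X Y : 'M[C]_(m, n)) : hermT (X + Y) = hermT X + hermT Y.
Proof. by apply/matrixP => i j; rewrite !(hermTE, mxE) rmorphD. Qed.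

Lemma hermTZ m n (c : C) (X : 'M[C]_(m, n)) : hermT (c *: X) = conjc c *: hermT X.
Proof. by apply/matrixP => i j; rewrite !(hermTE, mxE) rmorphM. Qed.

Lemma mxtrace_hermT n (X : 'M[C]_n) : \tr (hermT X) = conjc (\tr X).
Proof. by rewrite mxtrace_tr (trace_map_mx conjc). Qed.

Definition frob m n (X Y : 'M[C]_(m, n)) : C := \tr (hermT X *m Y).

Lemma frobE m n (X Y : 'M[C]_(m, n)) :
  frob X Y = \sum_i \sum_j conjc (X i j) * Y i j.
Proof.
rewrite /frob /mxtrace exchange_big; apply: eq_bigr => j _.
by rewrite mxE; apply: eq_bigr => i _; rewrite hermTE.
Qed.

Lemma frobC m n (X Y : 'M[C]_(m, n)) : frob Y X = conjc (frob X Y).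
Proof. by rewrite /frob -mxtrace_hermT hermT_mul hermTK. Qed.

Lemma frobDr m n (X Y Z : 'M[C]_(m, n)) : frob X (Y + Z) = frob X Y + frob X Z.
Proof. by rewrite /frob mulmxDr mxtraceD. Qed.

Lemma frobZr m n (c : C) (X Y : 'M[C]_(m, n)) : frob X (c *: Y) = c * frob X Y.
Proof. by rewrite /frob -scalemxAr mxtraceZ. Qed.

Lemma frobDl m n (X Y Z : 'M[C]_(m, n)) : frob (X + Y) Z = frob X Z + frob Y Z.
Proof. by rewrite /frob hermTD mulmxDl mxtraceD. Qed.

Lemma frobZl m n (c : C) (X Y : 'M[C]_(m, n)) : frob (c *: X) Y = conjc c * frob X Y.
Proof. by rewrite /frob hermTZ -scalemxAl mxtraceZ. Qed.

Lemma frob_suml m n k (X : 'I_k -> 'M[C]_(m, n)) Y :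
  frob (\sum_j X j) Y = \sum_j frob (X j) Y.
Proof.
elim/big_rec2: _ => [|j S s _ <-]; last exact: frobDl.
by rewrite /frob /hermT map_mx0 trmx0 mul0mx mxtrace0.
Qed.

Lemma frob_sumr m n k (X : 'M[C]_(m, n)) (Y : 'I_k -> 'M[C]_(m, n)) :
  frob X (\sum_j Y j) = \sum_j frob X (Y j).
Proof. by rewrite /frob mulmx_sumr raddf_sum. Qed.

Lemma frob0r m n (X : 'M[C]_(m, n)) : frob X 0 = 0.
Proof. by rewrite /frob mulmx0 mxtrace0. Qed.

Lemma frob0l m n (X : 'M[C]_(m, n)) : frob 0 X = 0.
Proof. by rewrite frobC frob0r rmorph0. Qed.

Lemma Re_sum (I : finType) (F : I -> C) :
  complex.Re (\sum_i F i) = \sum_i complex.Re (F i).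
Proof. exact: (raddf_sum (@complex.Re R : Rcomplex R -> R)). Qed.

Lemma Re_realM (a : R) (z : C) : complex.Re (a%:C * z) = a * complex.Re z.
Proof. by case: z => x y /=; ring. Qed.

Definition fnorm2 m n (X : 'M[C]_(m, n)) : R := complex.Re (frob X X).

Lemma fnorm2E m n (X : 'M[C]_(m, n)) :
  fnorm2 X = \sum_i \sum_j (complex.Re (X i j) ^+ 2 + complex.Im (X i j) ^+ 2).
Proof.
rewrite /fnorm2 frobE Re_sum; apply: eq_bigr => i _; rewrite Re_sum.
by apply: eq_bigr => j _; case: (X i j) => x y /=; ring.
Qed.

Lemma fnorm2_ge0 m n (X : 'M[C]_(m, n)) : 0 <= fnorm2 X.
Proof.
by rewrite fnorm2E; apply: sumr_ge0 => i _; apply: sumr_ge0 => j _; rewrite addr_ge0 ?sqr_ge0.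
Qed.

Lemma fnorm2_gt0 m n (X : 'M[C]_(m, n)) : X != 0 -> 0 < fnorm2 X.
Proof.
case/matrix0Pn => i [j nz_ij]; rewrite fnorm2E (bigD1 i) //= (bigD1 j) //=.
have sq_ge0 (x : C) : 0 <= complex.Re x ^+ 2 + complex.Im x ^+ 2.
  by rewrite addr_ge0 ?sqr_ge0.
have : 0 < complex.Re (X i j) ^+ 2 + complex.Im (X i j) ^+ 2.
  have : 0 < `|X i j| ^+ 2 by rewrite exprn_gt0 ?normr_gt0.
  by rewrite -add_Re2_Im2 ltcE /= => /andP[].
have : 0 <= \sum_(k | k != j) (complex.Re (X i k) ^+ 2 + complex.Im (X i k) ^+ 2).
  exact: sumr_ge0.
have : 0 <= \sum_(l | l != i) \sum_k (complex.Re (X l k) ^+ 2 + complex.Im (X l k) ^+ 2).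
  by apply: sumr_ge0 => l _; apply: sumr_ge0.
lra.
Qed.

Lemma fnorm2Z m n (c : R) (X : 'M[C]_(m, n)) : fnorm2 (c%:C *: X) = c ^+ 2 * fnorm2 X.
Proof. by rewrite /fnorm2 frobZl frobZr conjc_real mulrA -rmorphM Re_realM. Qed.

Lemma fnorm2D_orthogonal m n (X Y : 'M[C]_(m, n)) :
  frob X Y = 0 -> fnorm2 (X + Y) = fnorm2 X + fnorm2 Y.
Proof.
move=> XY0; rewrite /fnorm2 !(frobDl, frobDr) (frobC X Y) XY0 rmorph0 addr0 add0r.
exact: (raddfD (@complex.Re R : Rcomplex R -> R)).
Qed.

Lemma fnorm2_row m n1 n2 (X : 'M[C]_(m, n1)) (Y : 'M[C]_(m, n2)) :
  fnorm2 (row_mx X Y) = fnorm2 X + fnorm2 Y.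
Proof.
rewrite /fnorm2 /frob hermT_row mul_col_row mxtrace_block.
exact: (raddfD (@complex.Re R : Rcomplex R -> R)).
Qed.

Lemma Re_mxtrace_mul_hermT m n (X : 'M[C]_(m, n)) :
  complex.Re (\tr (X *m hermT X)) = fnorm2 X.
Proof. by rewrite /fnorm2 /frob mxtrace_mulC. Qed.

Definition gram n1 n2 p q (g : 'I_n1 -> 'M[C]_(p, q)) (h : 'I_n2 -> 'M[C]_(p, q)) :
  'M[C]_(n1, n2) := \matrix_(j, k) frob (g j) (h k).

Section GramAlgebra.
Variables (n1 n2 p q : nat) (g g1 g2 : 'I_n1 -> 'M[C]_(p, q)) (h h1 h2 : 'I_n2 -> 'M[C]_(p, q)).

Lemma gram_adj : gram h g = hermT (gram g h).
Proof. by apply/matrixP => j k; rewrite hermTE !mxE frobC. Qed.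

Lemma gramDl : gram (fun j => g1 j + g2 j) h = gram g1 h + gram g2 h.
Proof. by apply/matrixP => j k; rewrite !mxE frobDl. Qed.

Lemma gramDr : gram g (fun k => h1 k + h2 k) = gram g h1 + gram g h2.
Proof. by apply/matrixP => j k; rewrite !mxE frobDr. Qed.

Lemma gramZl c : gram (fun j => c *: g j) h = conjc c *: gram g h.
Proof. by apply/matrixP => j k; rewrite !mxE frobZl. Qed.

Lemma gramZr c : gram g (fun k => c *: h k) = c *: gram g h.
Proof. by apply/matrixP => j k; rewrite !mxE frobZr. Qed.
End GramAlgebra.

Definition catf T n1 n2 (g1 : 'I_n1 -> T) (g2 : 'I_n2 -> T) (k : 'I_(n1 + n2)) : T :=
  match fintype.split k with inl j => g1 j | inr j => g2 j end.

Lemma catf_lshift T n1 n2 (g1 : 'I_n1 -> T) (g2 : 'I_n2 -> T) j :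
  catf g1 g2 (lshift n2 j) = g1 j.
Proof. by rewrite /catf (unsplitK (inl j)). Qed.

Lemma catf_rshift T n1 n2 (g1 : 'I_n1 -> T) (g2 : 'I_n2 -> T) j :
  catf g1 g2 (rshift n1 j) = g2 j.
Proof. by rewrite /catf (unsplitK (inr j)). Qed.

Lemma gram_cat n1 n2 n3 n4 p q (g1 : 'I_n1 -> 'M[C]_(p, q)) (g2 : 'I_n2 -> 'M[C]_(p, q))
    (h1 : 'I_n3 -> 'M[C]_(p, q)) (h2 : 'I_n4 -> 'M[C]_(p, q)) :
  gram (catf g1 g2) (catf h1 h2) =
  block_mx (gram g1 h1) (gram g1 h2) (gram g2 h1) (gram g2 h2).
Proof.
apply/matrixP => j k; rewrite mxE.
case: (split_ordP j) => j' ->; case: (split_ordP k) => k' ->;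
  by rewrite ?(block_mxEul, block_mxEur, block_mxEdl, block_mxEdr) mxE
             ?(catf_lshift, catf_rshift).
Qed.

Lemma hadamard_gram n p q (P Q : 'M[C]_(n, q)) (Z V : 'M[C]_(p, n)) :
  hadamard (P *m hermT Q)^T (hermT Z *m V) =
  gram (fun j => col j Z *m row j Q) (fun k => col k V *m row k P).
Proof.
apply/matrixP => j k; rewrite !mxE frobE mulr_suml exchange_big /=.
apply: eq_bigr => i _; rewrite mulr_sumr; apply: eq_bigr => t _.
by rewrite !mxE !big_ord1 !mxE rmorphM /=; ring.
Qed.

Section RealGram.
Variables (n p q : nat) (g : 'I_n -> 'M[C]_(p, q)).
Local Notation G := (Defs.ReM (gram g g)).

Definition gram_comb (x : 'cV[R]_n) : 'M[C]_(p, q) := \sum_k (x k 0)%:C *: g k.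

Lemma gram_mulmxE x l : (G *m x) l 0 = complex.Re (frob (g l) (gram_comb x)).
Proof.
rewrite mxE frob_sumr Re_sum; apply: eq_bigr => k _.
by rewrite frobZr Re_realM !mxE mulrC.
Qed.

Lemma gram_quad x : (x^T *m G *m x) 0 0 = fnorm2 (gram_comb x).
Proof.
rewrite -mulmxA mxE /fnorm2 {2}/gram_comb frob_suml Re_sum; apply: eq_bigr => l _.
by rewrite gram_mulmxE frobZl conjc_real Re_realM mxE.
Qed.

Lemma tr_invmx_gram_gt0 : (0 < n)%N -> G \in unitmx -> 0 < \tr (invmx G).
Proof.
move=> n_gt0 G_unit; set N := invmx G.
have GN_col j : G *m col j N = col j 1 by rewrite !colE mulmxA mulmxV.
have diag_quad j : N j j = (let x := col j N in x^T *m G *m x) 0 0.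
  rewrite /= -mulmxA GN_col mxE (bigD1 j) //= big1 ?addr0.
    by rewrite !mxE eqxx mulr1.
  by move=> k /negPf kj; rewrite !mxE kj mulr0.
have diag_ge0 j : 0 <= N j j by rewrite diag_quad gram_quad fnorm2_ge0.
pose j0 := Ordinal n_gt0.
have diag_gt0 : 0 < N j0 j0.
  rewrite diag_quad gram_quad fnorm2_gt0 //; apply/eqP => comb0.
  have := gram_mulmxE (col j0 N) j0.
  by rewrite comb0 frob0r GN_col !mxE eqxx => /eqP; rewrite oner_eq0.
rewrite /mxtrace (bigD1 j0) //=.
have : 0 <= \sum_(j | j != j0) N j j by exact: sumr_ge0.
lra.
Qed.
End RealGram.

Lemma hermT_mul_self_col n (y : 'cV[C]_n) : hermT y *m y = (frob y y)%:M.
Proof. by rewrite {1}[hermT y *m y]mx11_scalar /frob trace_mx11. Qed.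

Lemma frob_mul_hermT_col m n (X : 'M[C]_(m, n)) (u : 'cV[C]_m) (v : 'cV[C]_n) :
  frob X (u *m hermT v) = frob (X *m v) u.
Proof. by rewrite /frob mulmxA mxtrace_mulC mulmxA -hermT_mul. Qed.

Lemma shrink_fnorm2_keeping_mull m Nt Ns (Q : 'M[C]_(m, Nt)) (Ws : 'M[C]_(Nt, Ns)) :
  (m < \rank Ws)%N -> exists2 Ws', Q *m Ws' = Q *m Ws & fnorm2 Ws' < fnorm2 Ws.
Proof.
case/(exists_ker_vector (Q *m Ws)) => y; rewrite -mulmxA.
set z := Ws *m y => Qz0 z_neq0.
have y_neq0 : y != 0 by apply: contraNneq z_neq0 => y0; rewrite /z y0 mulmx0.
have s_neq0 : frob y y != 0.
  by apply: contraTneq (fnorm2_gt0 y_neq0) => s0; rewrite /fnorm2 s0 ltxx.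
pose D := (frob y y)^-1 *: (z *m hermT y).
have Dy : D *m y = z.
  by rewrite -scalemxAl -mulmxA hermT_mul_self_col mul_mx_scalar scalerA mulVf ?scale1r.
have Ws'y0 : (Ws - D) *m y = 0 by rewrite mulmxBl Dy subrr.
exists (Ws - D); first by rewrite mulmxBr -scalemxAr mulmxA Qz0 mul0mx scaler0 subr0.
have orth : frob (Ws - D) ((frob y y)^-1 *: (z *m hermT y)) = 0.
  by rewrite frobZr frob_mul_hermT_col Ws'y0 frob0l mulr0.
rewrite -{2}(subrK D Ws) (fnorm2D_orthogonal orth) ltrDl fnorm2_gt0 //.
by apply: contraNneq z_neq0 => D0; rewrite -Dy /D D0 mul0mx.
Qed.

Lemma ReM_block m1 m2 n1 n2 (Xul : 'M[C]_(m1, n1)) (Xur : 'M[C]_(m1, n2))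
    (Xdl : 'M[C]_(m2, n1)) (Xdr : 'M[C]_(m2, n2)) :
  Defs.ReM (block_mx Xul Xur Xdl Xdr) =
  block_mx (Defs.ReM Xul) (Defs.ReM Xur) (Defs.ReM Xdl) (Defs.ReM Xdr).
Proof. exact: map_block_mx. Qed.

Lemma ReM_hermT m n (X : 'M[C]_(m, n)) : Defs.ReM (hermT X) = (Defs.ReM X)^T.
Proof. by apply/matrixP => i j; rewrite !mxE; case: (X j i). Qed.

Lemma ReM_iZ m n (X : 'M[C]_(m, n)) : Defs.ReM ('i *: X) = - Defs.ImM X.
Proof. by apply/matrixP => i j; rewrite !mxE; case: (X i j) => x y /=; ring. Qed.

Lemma ReM_realZ m n (c : R) (X : 'M[C]_(m, n)) : Defs.ReM (c%:C *: X) = c *: Defs.ReM X.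
Proof. by apply/matrixP => i j; rewrite !mxE Re_realM. Qed.

Lemma i_mul_conjc_i : 'i * conjc 'i = 1 :> C.
Proof. by apply/eqP; rewrite eq_complex /=; apply/andP; split; apply/eqP; ring. Qed.

Section FisherGram.
Variables (Nt Nr M T : nat) (alpha : 'I_M -> C).
Variables (A dAt dAp : 'M[C]_(Nt, M)) (B dBt dBp : 'M[C]_(Nr, M)).
Local Notation U := (Umx alpha).

(* Slepian-Bangs: with PA = A^H W, the noiseless echo is B U PA, and the four
   families below are its derivatives along theta_m, phi_m, Re alpha_m, Im alpha_m. *)
Definition fim_dir (PA Pd : 'M[C]_(M, T)) (dB : 'M[C]_(Nr, M)) (m : 'I_M) : 'M[C]_(Nr, T) :=
  col m dB *m row m (U *m PA) + col m B *m row m (U *m Pd).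

Definition fim_amp (PA : 'M[C]_(M, T)) (m : 'I_M) : 'M[C]_(Nr, T) := col m B *m row m PA.

Definition fim_family (PA Pt Pp : 'M[C]_(M, T)) :=
  catf (catf (fim_dir PA Pt dBt) (fim_dir PA Pp dBp))
       (catf (fim_amp PA) (fun m => 'i *: fim_amp PA m)).

Lemma fim_familyZ c PA Pt Pp :
  fim_family (c *: PA) (c *: Pt) (c *: Pp) = fun k => c *: fim_family PA Pt Pp k.
Proof.
apply: boolp.funext => k; rewrite /fim_family /fim_dir /fim_amp -!scalemxAr /catf.
by case: fintype.split => j; case: fintype.split => m;
  apply/matrixP => i t; rewrite !mxE !big_ord1 !mxE; ring.
Qed.

Section Precoder.
Variable W : 'M[C]_(Nt, T).
Local Notation P X := (hermT X *m W).

Lemma mulmx_gram_factor (X Y : 'M[C]_(Nt, M)) :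
  hermT X *m (W *m hermT W) *m Y = P X *m hermT (P Y).
Proof. by rewrite hermT_mul hermTK !mulmxA. Qed.

Lemma mulmx_gram_factorr (X Y : 'M[C]_(Nt, M)) :
  hermT X *m (W *m hermT W) *m Y *m hermT U = P X *m hermT (U *m P Y).
Proof. by rewrite !hermT_mul hermTK !mulmxA. Qed.

Lemma mulmx_gram_factorlr (X Y : 'M[C]_(Nt, M)) :
  U *m hermT X *m (W *m hermT W) *m Y *m hermT U = (U *m P X) *m hermT (U *m P Y).
Proof. by rewrite !hermT_mul hermTK !mulmxA. Qed.

Lemma F11g_gram dA1 dA2 dB1 dB2 :
  F11g alpha A B (W *m hermT W) dA1 dA2 dB1 dB2 =
  gram (fim_dir (P A) (P dA1) dB1) (fim_dir (P A) (P dA2) dB2).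
Proof.
rewrite /F11g !mulmx_gram_factorlr /fim_dir gramDl !gramDr [RHS]addrACA !addrA.
by congr (_ + _ + _ + _); apply: hadamard_gram.
Qed.

Lemma F13g_gram dA dB :
  F13g alpha A B (W *m hermT W) dA dB = gram (fim_dir (P A) (P dA) dB) (fim_amp (P A)).
Proof.
rewrite /F13g !mulmx_gram_factorr /fim_dir gramDl.
by congr (_ + _); apply: hadamard_gram.
Qed.

Lemma F33_gram : F33 A B (W *m hermT W) = gram (fim_amp (P A)) (fim_amp (P A)).
Proof. by rewrite /F33 mulmx_gram_factor hadamard_gram. Qed.

Lemma FIM_gram L sigma2 :
  FIM L sigma2 alpha A dAt dAp B dBt dBp (W *m hermT W) =
  (2 * L%:R / sigma2) *:
    Defs.ReM (gram (fim_family (P A) (P dAt) (P dAp)) (fim_family (P A) (P dAt) (P dAp))).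
Proof.
rewrite /FIM /F11 /F12 /F22 /F13 /F23 !F11g_gram !F13g_gram F33_gram /fim_family !gram_cat.
congr (_ *: _).
(* Generalizing the families (and below the Gram blocks) keeps the rewrites from
   unfolding [gram] while trying to match. *)
move: (fim_dir _ _ dBt) (fim_dir _ _ dBp) (fim_amp _) => gt gp a.
rewrite (gram_adj gt gp) (gram_adj gt a) (gram_adj gp a).
rewrite (gram_adj gt (fun m => 'i *: a m)) (gram_adj gp (fun m => 'i *: a m)).
rewrite (gram_adj a (fun m => 'i *: a m)) !gramZr gramZl scalerA i_mul_conjc_i scale1r.
move: (gram gt gt) (gram gt gp) (gram gp gp) (gram gt a) (gram gp a) (gram a a).
by move=> G11 G12 G22 G13 G23 G33; rewrite !ReM_block !ReM_hermT !ReM_iZ.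
Qed.
End Precoder.

Lemma FIM_scale L sigma2 (c : R) (W : 'M[C]_(Nt, T)) :
  FIM L sigma2 alpha A dAt dAp B dBt dBp ((c%:C *: W) *m hermT (c%:C *: W)) =
  c ^+ 2 *: FIM L sigma2 alpha A dAt dAp B dBt dBp (W *m hermT W).
Proof.
rewrite !FIM_gram -!scalemxAr fim_familyZ gramZl gramZr scalerA conjc_real.
by rewrite -expr2 -rmorphXn ReM_realZ !scalerA mulrC.
Qed.
End FisherGram.

Section Optimality.
Variables (Nt Nr M L T : nat) (sigma2 : R) (alpha : 'I_M -> C).
Variables (A dAt dAp : 'M[C]_(Nt, M)) (B dBt dBp : 'M[C]_(Nr, M)).
Hypotheses (M_gt0 : (0 < M)%N) (L_gt0 : (0 < L)%N) (sigma2_gt0 : 0 < sigma2).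
Local Notation fim W := (FIM L sigma2 alpha A dAt dAp B dBt dBp (W *m hermT W)).

Lemma tr_invmx_FIM_gt0 (W : 'M[C]_(Nt, T)) : fim W \in unitmx -> 0 < \tr (invmx (fim W)).
Proof.
have k_gt0 : 0 < 2 * L%:R / sigma2 by rewrite divr_gt0 // mulr_gt0 // ltr0n.
have k_unit : 2 * L%:R / sigma2 \is a GRing.unit by rewrite unitfE gt_eqF.
rewrite FIM_gram => F_unit; rewrite invmxZ // mxtraceZ mulr_gt0 ?invr_gt0 //.
by apply: tr_invmx_gram_gt0; [rewrite !addn_gt0 M_gt0 | rewrite -(unitmxZ _ k_unit)].
Qed.

Lemma FIM_eq (W W' : 'M[C]_(Nt, T)) :
  col_mx (hermT A) (col_mx (hermT dAt) (hermT dAp)) *m W' =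
  col_mx (hermT A) (col_mx (hermT dAt) (hermT dAp)) *m W -> fim W' = fim W.
Proof.
by rewrite !mul_col_mx => /eq_col_mx [eA /eq_col_mx [eAt eAp]]; rewrite !FIM_gram eA eAt eAp.
Qed.

Lemma FIM_improve (Pt : R) (W W' : 'M[C]_(Nt, T)) :
  fim W \in unitmx -> fim W' = fim W -> fnorm2 W' < Pt ->
  exists W'' : 'M[C]_(Nt, T),
    [/\ fnorm2 W'' <= Pt, fim W'' \in unitmx & \tr (invmx (fim W'')) < \tr (invmx (fim W))].
Proof.
move=> W_unit FW' W'_lt.
have [lam lam_gt1 lam_le] := exists_scale_gt1 (fnorm2_ge0 W') W'_lt.
have lam_gt0 : 0 < lam by apply: lt_trans lam_gt1.
have lam_unit : lam \is a GRing.unit by rewrite unitfE gt_eqF.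
have mu2 : Num.sqrt lam ^+ 2 = lam := sqr_sqrtr (ltW lam_gt0).
have lamF_unit : lam *: fim W \in unitmx by rewrite (unitmxZ _ lam_unit).
exists ((Num.sqrt lam)%:C *: W').
rewrite FIM_scale mu2 FW' fnorm2Z mu2; split; [exact: lam_le | exact: lamF_unit |].
rewrite (invmxZ lamF_unit) mxtraceZ.
have tr_gt0 := tr_invmx_FIM_gt0 W_unit.
by rewrite -[X in _ < X]mul1r (ltr_pM2r tr_gt0) (invf_lt1 lam_gt0).
Qed.
End Optimality.

End ComplexMatrices.

Theorem lemma5 (R : realType) (Nt Nr K M L Ns : nat)
  (sigma2 Pt delta_s : R)
  (a da_t da_p : R -> R -> 'cV[R[i]]_Nt)
  (b db_t db_p : R -> R -> 'cV[R[i]]_Nr)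
  (theta phi : 'I_M -> R) (alpha : 'I_M -> R[i])
  (Wc : 'M[R[i]]_(Nt, K)) (Ws : 'M[R[i]]_(Nt, Ns)) :
  (0 < Nt)%N -> (0 < Nr)%N -> (0 < K)%N -> (0 < M)%N -> (0 < L)%N ->
  0 < sigma2 -> 0 < Pt -> 0 < delta_s ->
  is_partial1 a da_t -> is_partial2 a da_p ->
  is_partial1 b db_t -> is_partial2 b db_p ->
  let F := fun (Wc' : 'M[R[i]]_(Nt, K)) (Ws' : 'M[R[i]]_(Nt, Ns)) =>
    FIM L sigma2 alpha
      (steer a theta phi) (steer da_t theta phi) (steer da_p theta phi)
      (steer b theta phi) (steer db_t theta phi) (steer db_p theta phi)
      (Wc' *m hermT Wc' + Ws' *m hermT Ws') in
  let feasible := fun (Wc' : 'M[R[i]]_(Nt, K)) (Ws' : 'M[R[i]]_(Nt, Ns)) =>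
    complex.Re (\tr (row_mx Wc' Ws' *m hermT (row_mx Wc' Ws'))) <= Pt
    /\ F Wc' Ws' \in unitmx in
  let obj := fun (Wc' : 'M[R[i]]_(Nt, K)) (Ws' : 'M[R[i]]_(Nt, Ns)) =>
    - delta_s * \tr (invmx (F Wc' Ws')) in
  feasible Wc Ws ->
  (forall (Wc' : 'M[R[i]]_(Nt, K)) (Ws' : 'M[R[i]]_(Nt, Ns)),
      feasible Wc' Ws' -> obj Wc' Ws' <= obj Wc Ws) ->
  (\rank Ws <= 3 * M)%N.
Proof.
move=> _ _ _ M_gt0 L_gt0 sigma2_gt0 _ delta_gt0 _ _ _ _ F feasible obj [power_le W_unit] W_opt.
have F_row Wc' Ws' : F Wc' Ws' = FIM L sigma2 alpha
    (steer a theta phi) (steer da_t theta phi) (steer da_p theta phi)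
    (steer b theta phi) (steer db_t theta phi) (steer db_p theta phi)
    (row_mx Wc' Ws' *m hermT (row_mx Wc' Ws')).
  by rewrite /F hermT_row mul_row_col.
rewrite Re_mxtrace_mul_hermT fnorm2_row in power_le; rewrite F_row in W_unit.
rewrite leqNgt mulSn mul2n -addnn; apply/negP => rank_gt.
have [Ws' QWs' Ws'_lt] := shrink_fnorm2_keeping_mull (col_mx (hermT (steer a theta phi))
  (col_mx (hermT (steer da_t theta phi)) (hermT (steer da_p theta phi)))) rank_gt.
have FW' : F Wc Ws' = F Wc Ws by rewrite !F_row; apply: FIM_eq; rewrite !mul_mx_row QWs'.
have W'_lt : fnorm2 (row_mx Wc Ws') < Pt by rewrite fnorm2_row; lra.
rewrite !F_row in FW'.
have [W'' [W''_le W''_unit tr_lt]] := FIM_improve M_gt0 L_gt0 sigma2_gt0 W_unit FW' W'_lt.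
have := W_opt (lsubmx W'') (rsubmx W'').
rewrite /feasible /obj !F_row hsubmxK Re_mxtrace_mul_hermT => /(_ (conj W''_le W''_unit)).
have delta_lt0 : - delta_s < 0 by rewrite oppr_lt0.
by rewrite (ler_nM2l delta_lt0) leNgt tr_lt.
Qed.
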